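(* Let $g$ be the pp-wave metric $ds^2=H(u,x^1,x^2)\,du^2+2\,du\,dv+(dx^1)^2+(dx^2)^2$ and let $Y$ be a conformal Killing vector field of $g$, $\mathcal L_Yg=2\omega g$, of the form: there exist smooth functions $a(u),a_1(u),a_2(u),\bar b(u)$ and a constant $\mu$ with $$\omega=\bar b(u)+x^ia_i'(u)-\mu v,\qquad Y^u=\tfrac{\mu}{2}\delta_{ij}x^ix^j+a_i(u)x^i+a(u),$$ $$[\mu x^i+a_i(u)]\,\partial_iH=2\mu H+2a_i''(u)x^i-2a''(u)+4\bar b'(u).$$ For a real constant $c$ define the vector field $f$ by $f^u=0$, $$f^v=\tfrac{u}{2}\left(x^ia_i'(u)-a'(u)+2\bar b(u)-2\mu v\right)+\tfrac12x^ia_i(u)+\tfrac{\mu}{4}\delta_{ij}x^ix^j+\tfrac12a(u)-c\,\tfrac{\mu}{4}u^2,\qquad f^i=-\tfrac{u}{2}\left(\mu x^i+a_i(u)\right),$$ and set $\Upsilon=Y+c\,f$. Then $$\mathcal L_\Upsilon g_{\mu\nu}=2\Omega\left(g_{\mu\nu}+c\,K_{\mu\nu}\right),\qquad \Omega=\omega-\tfrac{c}{2}\mu u,\quad K=du\otimes du .$$ Consequently, for the geodesic Lagrangian $L=\frac{1}{2n}\left(H\dot u^2+2\dot u\dot v+(\dot x^1)^2+(\dot x^2)^2\right)-\frac{m^2}{2}n$, along any solution of its Euler–Lagrange equations on which the (always conserved) momentum $p_v=\dot u/n$ takes a constant value $\pi_v\neq0$, the quantity $I=\Upsilon^\mu p_\mu$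 with $c=m^2/\pi_v^2$ is constant.
   Context: Coordinates $(u,v,x^1,x^2)$, indices $i,j=1,2$ are summed with $\delta_{ij}$, $\partial_i=\partial/\partial x^i$, and primes denote $d/du$. $n(\lambda)>0$ is the einbein, dots are $d/d\lambda$, and $p_\mu=\partial L/\partial\dot{\mathrm x}^\mu$. $K=du\otimes du$ equals $\ell\otimes\ell$ with indices lowered, where $\ell=\partial_v$ is the covariantly constant null Killing vector of the pp-wave; thus $K^{\mu\nu}p_\mu p_\nu=p_v^2$. *)

From Stdlib Require Import Reals.
From Coquelicot Require Import Coquelicot.
Open Scope R_scope.

(* Points of spacetime, coordinates (u, v, x1, x2); index 0 = u, 1 = v, 2 = x1, 3 = x2. *)
Definition pt : Type := (R * R * R * R)%type.

Definition crd (p : pt) (i : nat) : R :=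
  match p with (u, v, x1, x2) =>
    match i with 0%nat => u | 1%nat => v | 2%nat => x1 | _ => x2 end end.

Definition upd (p : pt) (i : nat) (t : R) : pt :=
  match p with (u, v, x1, x2) =>
    match i with
    | 0%nat => (t, v, x1, x2) | 1%nat => (u, t, x1, x2)
    | 2%nat => (u, v, t, x2) | _ => (u, v, x1, t) end end.

Definition pd (i : nat) (F : pt -> R) : pt -> R :=
  fun p => Derive (fun t => F (upd p i t)) (crd p i).

Fixpoint iterpd (l : list nat) (F : pt -> R) : pt -> R :=
  match l with nil => F | cons i l' => pd i (iterpd l' F) end.

Definition smooth4 (F : pt -> R) : Prop :=
  forall l : list nat,
    (forall p, continuous (iterpd l F) p) /\
    (forall (i : nat) (p : pt), (i < 4)%nat ->
       ex_derive (fun t => iterpd l F (upd p i t)) (crd p i)).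

Definition smooth1 (f : R -> R) : Prop := forall (k : nat) (x : R), ex_derive_n f k x.

Definition sum4 (F : nat -> R) : R := sum_f_R0 F 3.

(* vector fields (components Y^mu) and symmetric 2-tensors (components T_{mu nu}) *)
Definition VF : Type := nat -> pt -> R.
Definition T2 : Type := nat -> nat -> pt -> R.

Definition ppg (H : R -> R -> R -> R) : T2 :=
  fun mu nu p =>
    match mu, nu with
    | 0%nat, 0%nat => H (crd p 0) (crd p 2) (crd p 3)
    | 0%nat, 1%nat | 1%nat, 0%nat => 1
    | 2%nat, 2%nat | 3%nat, 3%nat => 1
    | _, _ => 0 end.

Definition Kdu : T2 :=
  fun mu nu _ => match mu, nu with 0%nat, 0%nat => 1 | _, _ => 0 end.

Definition Lie (X : VF) (g : T2) : T2 :=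
  fun mu nu p =>
    sum4 (fun r => X r p * pd r (g mu nu) p
                   + g r nu p * pd mu (X r) p
                   + g mu r p * pd nu (X r) p).

Definition fvf (a a1 a2 bb : R -> R) (mu c : R) : VF :=
  fun i p =>
    let u := crd p 0 in let v := crd p 1 in
    let x1 := crd p 2 in let x2 := crd p 3 in
    match i with
    | 0%nat => 0
    | 1%nat =>
        u / 2 * (x1 * Derive a1 u + x2 * Derive a2 u - Derive a u + 2 * bb u - 2 * mu * v)
        + 1 / 2 * (x1 * a1 u + x2 * a2 u) + mu / 4 * (x1 ^ 2 + x2 ^ 2)
        + 1 / 2 * a u - c * (mu / 4) * u ^ 2
    | 2%nat => - (u / 2) * (mu * x1 + a1 u)
    | _ => - (u / 2) * (mu * x2 + a2 u)
    end.

Definition Ups (Y : VF) (a a1 a2 bb : R -> R) (mu c : R) : VF :=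
  fun i p => Y i p + c * fvf a a1 a2 bb mu c i p.

Definition omg (a1 a2 bb : R -> R) (mu : R) (p : pt) : R :=
  bb (crd p 0) + crd p 2 * Derive a1 (crd p 0) + crd p 3 * Derive a2 (crd p 0) - mu * crd p 1.

(* geodesic Lagrangian with einbein n; x = position, xd = velocity *)
Definition Lag (H : R -> R -> R -> R) (m : R) (x xd : pt) (n : R) : R :=
  1 / (2 * n) * (H (crd x 0) (crd x 2) (crd x 3) * crd xd 0 ^ 2
                 + 2 * crd xd 0 * crd xd 1 + crd xd 2 ^ 2 + crd xd 3 ^ 2)
  - m ^ 2 / 2 * n.

Definition vel (gam : R -> pt) (l : R) : pt :=
  (Derive (fun s => crd (gam s) 0) l, Derive (fun s => crd (gam s) 1) l,
   Derive (fun s => crd (gam s) 2) l, Derive (fun s => crd (gam s) 3) l).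

Definition mom (H : R -> R -> R -> R) (m : R) (gam : R -> pt) (N : R -> R) (i : nat) (l : R) : R :=
  Derive (fun t => Lag H m (gam l) (upd (vel gam l) i t) (N l)) (crd (vel gam l) i).

Definition dLdx (H : R -> R -> R -> R) (m : R) (gam : R -> pt) (N : R -> R) (i : nat) (l : R) : R :=
  Derive (fun t => Lag H m (upd (gam l) i t) (vel gam l) (N l)) (crd (gam l) i).

Definition dLdn (H : R -> R -> R -> R) (m : R) (gam : R -> pt) (N : R -> R) (l : R) : R :=
  Derive (fun t => Lag H m (gam l) (vel gam l) t) (N l).

(* Euler-Lagrange equations on the open interval (l1, l2); L does not depend on ndot,
   so the n-equation is the constraint dL/dn = 0 *)
Definition EL_solution (H : R -> R -> R -> R) (m : R) (gam : R -> pt) (N : R -> R)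
    (l1 l2 : R) : Prop :=
  forall l, l1 < l < l2 ->
    (forall i, (i < 4)%nat -> is_derive (mom H m gam N i) l (dLdx H m gam N i l))
    /\ dLdn H m gam N l = 0.

From Stdlib Require Import Reals Lra Lia.
From Coquelicot Require Import Coquelicot.
Open Scope R_scope.

(* Along the flow of f the metric changes by L_f g = 2 omega K - mu u (g + c K), which turns the
   conformal Killing equation of Y into L_Ups g = 2 Omega (g + c K).  Along a solution of the
   Euler-Lagrange equations, d/dl (Ups^mu p_mu) = (1/2n) xdot^mu xdot^nu (L_Ups g)_{mu nu}
   = (Omega/n) (g(xdot, xdot) + c (xdot^u)^2); the constraint gives g(xdot, xdot) = - m^2 n^2
   and p_v = xdot^u / n, so with c = m^2 / p_v^2 the derivative vanishes.  The only analytic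
   input is the chain rule for functions with continuous partial derivatives, obtained by
   the mean value theorem one coordinate at a time. *)

Lemma crd_upd (p : pt) i t : crd (upd p i t) i = t.
Proof. destruct p as [[[u v] x] y]; destruct i as [|[|[|i]]]; reflexivity. Qed.

Lemma crd_upd_ne (p : pt) i j t :
  (i < 4)%nat -> (j < 4)%nat -> i <> j -> crd (upd p i t) j = crd p j.
Proof.
  destruct p as [[[u v] x] y]; intros Hi Hj Hij.
  destruct i as [|[|[|[|i]]]]; destruct j as [|[|[|[|j]]]]; (lia || reflexivity).
Qed.

Lemma upd_upd (p : pt) i s t : upd (upd p i s) i t = upd p i t.
Proof. destruct p as [[[u v] x] y]; destruct i as [|[|[|i]]]; reflexivity. Qed.

Lemma upd_crd (p : pt) i : upd p i (crd p i) = p.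
Proof. destruct p as [[[u v] x] y]; destruct i as [|[|[|i]]]; reflexivity. Qed.

Lemma pt_eta (p : pt) : p = (crd p 0, crd p 1, crd p 2, crd p 3).
Proof. destruct p as [[[u v] x] y]; reflexivity. Qed.

Lemma ball_pt (q p : pt) (e : R) :
  ball q e p <-> forall i, (i < 4)%nat -> ball (crd q i) e (crd p i).
Proof.
  destruct q as [[[u v] x] y]; destruct p as [[[u' v'] x'] y']; split.
  - intros [[[Hu Hv] Hx] Hy] i Hi; destruct i as [|[|[|[|i]]]]; (lia || assumption).
  - intros Hc; repeat split; [apply (Hc 0%nat) | apply (Hc 1%nat) | apply (Hc 2%nat)
      | apply (Hc 3%nat)]; lia.
Qed.

Lemma ball_upd (q p : pt) (e t : R) i :
  (i < 4)%nat -> ball q e p -> ball (crd q i) e t -> ball q e (upd p i t).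
Proof.
  rewrite !ball_pt; intros Hi Hp Ht j Hj.
  destruct (Nat.eq_dec i j) as [<-|Hij].
  - now rewrite crd_upd.
  - rewrite crd_upd_ne; auto.
Qed.

Definition pt_splice (p q : pt) (k : nat) : pt :=
  (if Nat.ltb 0 k then crd p 0 else crd q 0, if Nat.ltb 1 k then crd p 1 else crd q 1,
   if Nat.ltb 2 k then crd p 2 else crd q 2, if Nat.ltb 3 k then crd p 3 else crd q 3).

Lemma crd_pt_splice (p q : pt) k i :
  (i < 4)%nat -> crd (pt_splice p q k) i = if Nat.ltb i k then crd p i else crd q i.
Proof. intros Hi; destruct i as [|[|[|[|i]]]]; (lia || reflexivity). Qed.

Lemma pt_splice_same (p : pt) k : pt_splice p p k = p.
Proof.
  destruct p as [[[u v] x] y]; unfold pt_splice; simpl.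
  now destruct (Nat.ltb 0 k), (Nat.ltb 1 k), (Nat.ltb 2 k), (Nat.ltb 3 k).
Qed.

Lemma pt_splice_S (p q : pt) k :
  (k < 4)%nat -> pt_splice p q (S k) = upd (pt_splice p q k) k (crd p k).
Proof.
  destruct p as [[[u v] x] y]; destruct q as [[[u' v'] x'] y']; intros Hk.
  destruct k as [|[|[|[|k]]]]; (lia || reflexivity).
Qed.

Lemma pt_splice_telescope (F : pt -> R) (p q : pt) :
  F p - F q = sum4 (fun k => F (pt_splice p q (S k)) - F (pt_splice p q k)).
Proof.
  unfold sum4; simpl.
  replace (pt_splice p q 4) with p by (rewrite (pt_eta p); reflexivity).
  replace (pt_splice p q 0) with q by (rewrite (pt_eta q); reflexivity).
  ring.
Qed.

Lemma smooth1_ex_derive (f : R -> R) x : smooth1 f -> ex_derive f x.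
Proof. intros Hf; exact (Hf 1%nat x). Qed.

Lemma smooth1_ex_derive2 (f : R -> R) x : smooth1 f -> ex_derive (Derive f) x.
Proof. intros Hf; exact (Hf 2%nat x). Qed.

Lemma smooth4_ex_derive (F : pt -> R) i p :
  smooth4 F -> (i < 4)%nat -> ex_derive (fun t => F (upd p i t)) (crd p i).
Proof. intros HF Hi; exact (proj2 (HF nil) i p Hi). Qed.

Lemma smooth4_continuous_pd (F : pt -> R) i p : smooth4 F -> continuous (pd i F) p.
Proof. intros HF; exact (proj1 (HF (cons i nil)) p). Qed.

Lemma is_derive_Rplus (f g : R -> R) (x a b : R) :
  is_derive f x a -> is_derive g x b -> is_derive (fun y => f y + g y) x (a + b).
Proof. exact (is_derive_plus f g x a b). Qed.

Lemma is_derive_Rmult (f g : R -> R) (x a b : R) :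
  is_derive f x a -> is_derive g x b -> is_derive (fun y => f y * g y) x (a * g x + f x * b).
Proof. intros Hf Hg; exact (is_derive_mult f g x a b Hf Hg Rmult_comm). Qed.

Lemma is_derive_sum4 (F : nat -> R -> R) (d : nat -> R) (x : R) :
  (forall k, (k < 4)%nat -> is_derive (F k) x (d k)) ->
  is_derive (fun y => sum4 (fun k => F k y)) x (sum4 d).
Proof.
  intros HF; unfold sum4; simpl.
  repeat apply is_derive_Rplus; apply HF; lia.
Qed.

Lemma pd_upd (F : pt -> R) i p t : pd i F (upd p i t) = Derive (fun s => F (upd p i s)) t.
Proof. unfold pd; rewrite crd_upd; apply Derive_ext; intros s; now rewrite upd_upd. Qed.

Lemma ex_derive_upd (F : pt -> R) i :
  (forall p, ex_derive (fun t => F (upd p i t)) (crd p i)) ->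
  forall p t, ex_derive (fun s => F (upd p i s)) t.
Proof.
  intros HF p t; specialize (HF (upd p i t)); rewrite crd_upd in HF.
  eapply ex_derive_ext; [|exact HF]; intros s; simpl; now rewrite upd_upd.
Qed.

Lemma mean_value_coord (F : pt -> R) i (q : pt) (x y : R) :
  (forall p, ex_derive (fun t => F (upd p i t)) (crd p i)) ->
  exists c, Rmin x y <= c <= Rmax x y /\
    F (upd q i y) - F (upd q i x) = pd i F (upd q i c) * (y - x).
Proof.
  intros HF.
  destruct (MVT_gen (fun t => F (upd q i t)) x y (fun t => pd i F (upd q i t)))
    as [c [Hc E]]; [| |now exists c].
  - intros t _; rewrite pd_upd; apply Derive_correct, ex_derive_upd, HF.
  - intros t _; apply continuity_pt_filterlim.
    apply (@ex_derive_continuous R_AbsRing R_NormedModule), ex_derive_upd, HF.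
Qed.

Lemma is_derive_locally_lipschitz (g : R -> R) (l D : R) :
  is_derive g l D -> locally l (fun s => Rabs (g s - g l) <= (Rabs D + 1) * Rabs (s - l)).
Proof.
  intros Hg; apply is_derive_Reals in Hg; destruct (Hg 1 Rlt_0_1) as [d Hd].
  exists d; intros s Hs; change (Rabs (s - l) < d) in Hs; change R in s.
  destruct (Req_dec s l) as [->|Hne]; [rewrite !Rminus_diag, Rabs_R0; lra|].
  specialize (Hd (s - l) ltac:(lra) Hs); replace (l + (s - l)) with s in Hd by ring.
  replace (g s - g l) with (((g s - g l) / (s - l) - D) * (s - l) + D * (s - l))
    by (field; lra).
  eapply Rle_trans; [apply Rabs_triang|]; rewrite !Rabs_mult.
  pose proof (Rabs_pos (s - l)); nra.
Qed.

Lemma is_derive_littleo (r : R -> R) l :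
  r l = 0 -> (forall eps : posreal, locally l (fun s => Rabs (r s) <= eps * Rabs (s - l))) ->
  is_derive r l 0.
Proof.
  intros Hr0 Hr; apply is_derive_Reals; intros eps Heps.
  destruct (Hr (mkposreal (eps / 2) ltac:(lra))) as [d Hd]; exists d; intros h Hh Hhd.
  specialize (Hd (l + h)); simpl in Hd.
  assert (Hball : ball l d (l + h)).
  { change (Rabs (l + h - l) < d); now replace (l + h - l) with h by ring. }
  specialize (Hd Hball); replace (l + h - l) with h in Hd by ring.
  rewrite Hr0; replace ((r (l + h) - 0) / h - 0) with (r (l + h) / h) by (field; auto).
  pose proof (Rabs_pos_lt h Hh).
  unfold Rdiv; rewrite Rabs_mult, Rabs_inv.
  apply Rle_lt_trans with (eps / 2 * Rabs h * / Rabs h).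
  - apply Rmult_le_compat_r; [left; apply Rinv_0_lt_compat|]; auto.
  - replace (eps / 2 * Rabs h * / Rabs h) with (eps / 2) by (field; lra); lra.
Qed.

Lemma Rabs_between (a b c : R) : Rmin a b <= c <= Rmax a b -> Rabs (c - a) <= Rabs (b - a).
Proof. unfold Rmin, Rmax; destruct (Rle_dec a b); intros; split_Rabs; lra. Qed.

(* Mean value theorem in coordinate [i]; continuity of [pd i F] at [Q l] makes the remainder
   [o(s - l)]. *)
Lemma is_derive_coord_increment (F : pt -> R) i (Q : R -> pt) (g : R -> R) (l D : R) :
  (i < 4)%nat ->
  (forall p, ex_derive (fun t => F (upd p i t)) (crd p i)) ->
  continuous (pd i F) (Q l) -> continuous Q l ->
  (forall s, crd (Q s) i = g l) -> is_derive g l D ->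
  is_derive (fun s => F (upd (Q s) i (g s)) - F (Q s)) l (pd i F (Q l) * D).
Proof.
  intros Hi HF HpdF HQ HQi Hg.
  set (A := pd i F (Q l)); set (K := Rabs D + 1).
  assert (HK : 0 < K) by (pose proof (Rabs_pos D); unfold K; lra).
  set (r := fun s => F (upd (Q s) i (g s)) - F (Q s) - A * (g s - g l)).
  assert (Hr : is_derive r l 0).
  { apply is_derive_littleo.
    { unfold r; rewrite <- (HQi l), upd_crd; ring. }
    intros eps.
    assert (HeK : 0 < eps / K) by (apply Rdiv_lt_0_compat; [apply cond_pos|lra]).
    destruct (proj1 (filterlim_locally _ _) HpdF (mkposreal _ HeK)) as [d Hd]; simpl in Hd.
    pose proof (proj1 (filterlim_locally _ _) HQ d) as HQd.
    pose proof (@ex_derive_continuous R_AbsRing R_NormedModule g l (ex_intro _ D Hg)) as Hgc.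
    pose proof (proj1 (filterlim_locally _ _) Hgc d) as Hgd.
    generalize (filter_and _ _ (is_derive_locally_lipschitz g l D Hg) (filter_and _ _ HQd Hgd)).
    apply filter_imp; intros s [Hlip [Hs Hgs]].
    destruct (mean_value_coord F i (Q s) (g l) (g s) HF) as [c [Hc E]].
    replace (upd (Q s) i (g l)) with (Q s) in E
      by (rewrite <- (HQi s); symmetry; apply upd_crd).
    assert (Hnear : ball (Q l) d (upd (Q s) i c)).
    { apply ball_upd; auto; rewrite HQi.
      change (Rabs (c - g l) < d); eapply Rle_lt_trans; [apply Rabs_between, Hc|exact Hgs]. }
    specialize (Hd _ Hnear); change (Rabs (pd i F (upd (Q s) i c) - A) < eps / K) in Hd.
    unfold r; simpl; rewrite E.
    replace (pd i F (upd (Q s) i c) * (g s - g l) - A * (g s - g l))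
      with ((pd i F (upd (Q s) i c) - A) * (g s - g l)) by ring.
    rewrite Rabs_mult.
    apply Rle_trans with (eps / K * (K * Rabs (s - l))).
    - apply Rmult_le_compat; auto using Rabs_pos; lra.
    - right; field; lra. }
  assert (Hlin : is_derive (fun s => A * (g s - g l)) l (A * D)).
  { apply is_derive_scal.
    pose proof (is_derive_minus _ _ _ _ _ Hg (is_derive_const (g l) l)) as Hm.
    replace D with (minus D zero); [exact Hm|apply minus_zero_r]. }
  rewrite <- (Rplus_0_r (A * D)).
  eapply is_derive_ext; [|exact (is_derive_Rplus _ _ _ _ _ Hlin Hr)].
  intros s; unfold r; simpl; ring.
Qed.

Lemma continuous_pt_splice (gam : R -> pt) (l : R) k :
  (forall i, (i < 4)%nat -> continuous (fun s => crd (gam s) i) l) ->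
  continuous (fun s => pt_splice (gam s) (gam l) k) l.
Proof.
  intros Hc; apply filterlim_locally; intros eps.
  rewrite pt_splice_same.
  assert (Hi : forall i, (i < 4)%nat ->
    locally l (fun s => ball (crd (gam l) i) eps (crd (gam s) i)))
    by (intros i Hi; exact (proj1 (filterlim_locally _ _) (Hc i Hi) eps)).
  generalize (@filter_and _ (locally l) _ _ _ (Hi 0%nat ltac:(lia))
    (@filter_and _ (locally l) _ _ _ (Hi 1%nat ltac:(lia))
    (@filter_and _ (locally l) _ _ _ (Hi 2%nat ltac:(lia)) (Hi 3%nat ltac:(lia))))).
  apply filter_imp; intros s Hs; apply ball_pt; intros i Hi'.
  rewrite crd_pt_splice by exact Hi'.
  destruct (Nat.ltb i k); [|apply ball_center].
  destruct i as [|[|[|[|i]]]]; (lia || tauto).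
Qed.

(* Move the coordinates one at a time, through the points [pt_splice (gam s) (gam l) k]. *)
Lemma is_derive_comp_pt (F : pt -> R) (gam : R -> pt) l :
  (forall i, (i < 4)%nat -> forall p, ex_derive (fun t => F (upd p i t)) (crd p i)) ->
  (forall i, (i < 4)%nat -> continuous (pd i F) (gam l)) ->
  (forall i, (i < 4)%nat -> ex_derive (fun s => crd (gam s) i) l) ->
  is_derive (fun s => F (gam s)) l
    (sum4 (fun i => pd i F (gam l) * Derive (fun s => crd (gam s) i) l)).
Proof.
  intros HF HpdF Hgam.
  assert (Hsteps : is_derive (fun s => F (gam s) - F (gam l)) l
    (sum4 (fun i => pd i F (gam l) * Derive (fun s => crd (gam s) i) l))).
  { eapply is_derive_ext; [intros s; symmetry; apply pt_splice_telescope|].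
    apply is_derive_sum4; intros k Hk.
    eapply is_derive_ext; [intros s; rewrite (pt_splice_S _ _ _ Hk); reflexivity|].
    rewrite <- (pt_splice_same (gam l) k) at 1.
    apply (is_derive_coord_increment F k (fun s => pt_splice (gam s) (gam l) k)); auto.
    - rewrite pt_splice_same; auto.
    - apply continuous_pt_splice; intros i Hi.
      apply (@ex_derive_continuous R_AbsRing R_NormedModule); auto.
    - intros s; rewrite crd_pt_splice by exact Hk; now rewrite Nat.ltb_irrefl.
    - apply Derive_correct; auto. }
  rewrite <- Rplus_0_r.
  eapply is_derive_ext;
    [|exact (is_derive_Rplus _ _ _ _ _ Hsteps (is_derive_const (F (gam l)) l))].
  intros s; simpl; ring.
Qed.

Lemma is_derive_const_on (f : R -> R) (l1 l2 la lb : R) :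
  (forall l, l1 < l < l2 -> is_derive f l 0) ->
  l1 < la < l2 -> l1 < lb < l2 -> f la = f lb.
Proof.
  intros Hf Ha Hb.
  assert (Hin : forall x, Rmin la lb <= x <= Rmax la lb -> l1 < x < l2)
    by (intros x; unfold Rmin, Rmax; destruct (Rle_dec la lb); lra).
  destruct (MVT_gen f la lb (fun _ => 0)) as [x [_ E]].
  - intros x Hx; apply Hf, Hin; lra.
  - intros x Hx; apply continuity_pt_filterlim.
    apply (@ex_derive_continuous R_AbsRing R_NormedModule); exists 0; auto.
  - lra.
Qed.

Lemma sum4_ext (F G : nat -> R) :
  (forall k, (k < 4)%nat -> F k = G k) -> sum4 F = sum4 G.
Proof. intros E; unfold sum4; simpl; rewrite !E by lia; reflexivity. Qed.

Lemma pd_plus_scal (X1 X2 : pt -> R) (c : R) k p :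
  ex_derive (fun t => X1 (upd p k t)) (crd p k) ->
  ex_derive (fun t => X2 (upd p k t)) (crd p k) ->
  pd k (fun q => X1 q + c * X2 q) p = pd k X1 p + c * pd k X2 p.
Proof.
  intros H1 H2; unfold pd.
  rewrite Derive_plus, Derive_scal; auto using ex_derive_scal.
Qed.

Lemma Lie_plus_scal (X1 X2 : VF) (g : T2) (c : R) i j p :
  (forall r k, (r < 4)%nat -> (k < 4)%nat -> ex_derive (fun t => X1 r (upd p k t)) (crd p k)) ->
  (forall r k, (r < 4)%nat -> (k < 4)%nat -> ex_derive (fun t => X2 r (upd p k t)) (crd p k)) ->
  (i < 4)%nat -> (j < 4)%nat ->
  Lie (fun r q => X1 r q + c * X2 r q) g i j p = Lie X1 g i j p + c * Lie X2 g i j p.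
Proof.
  intros H1 H2 Hi Hj.
  assert (E : forall r k, (r < 4)%nat -> (k < 4)%nat ->
    pd k (fun q => X1 r q + c * X2 r q) p = pd k (X1 r) p + c * pd k (X2 r) p)
    by (intros r k Hr Hk; apply pd_plus_scal; auto).
  unfold Lie, sum4; simpl.
  rewrite (E 0%nat i), (E 1%nat i), (E 2%nat i), (E 3%nat i),
    (E 0%nat j), (E 1%nat j), (E 2%nat j), (E 3%nat j) by lia.
  ring.
Qed.

Ltac compute_Derive :=
  match goal with
  | |- context [Derive ?f ?x] =>
    lazymatch f with
    | (fun _ => _) =>
      let L := fresh "L" in let HD := fresh "HD" in
      evar (L : R);
      assert (HD : is_derive f x L) by (unfold L; auto_derive; [repeat split; auto | reflexivity]);
      rewrite (is_derive_unique _ _ _ HD); unfold L; clear L HD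
    end
  end.

Ltac eta_reduce :=
  repeat match goal with
  | |- context [fun x : R => ?f x] => change (fun x : R => f x) with f
  | E : context [fun x : R => ?f x] |- _ => change (fun x : R => f x) with f in E
  end.

Section VectorField_f.

Variables (a a1 a2 bb : R -> R) (mu c : R).
Hypotheses (Ha : forall x, ex_derive a x) (Ha' : forall x, ex_derive (Derive a) x)
  (Ha1 : forall x, ex_derive a1 x) (Ha1' : forall x, ex_derive (Derive a1) x)
  (Ha2 : forall x, ex_derive a2 x) (Ha2' : forall x, ex_derive (Derive a2) x)
  (Hbb : forall x, ex_derive bb x).

Lemma ex_derive_fvf r k p : ex_derive (fun t => fvf a a1 a2 bb mu c r (upd p k t)) (crd p k).
Proof.
  destruct p as [[[u v] x1] x2].
  destruct r as [|[|[|[|r]]]]; destruct k as [|[|[|[|k]]]]; simpl; auto_derive; repeat split; auto.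
Qed.

Lemma is_derive_fvf_comp (gam : R -> pt) r l :
  (forall i, (i < 4)%nat -> ex_derive (fun s => crd (gam s) i) l) ->
  is_derive (fun s => fvf a a1 a2 bb mu c r (gam s)) l
    (sum4 (fun k => pd k (fvf a a1 a2 bb mu c r) (gam l) * Derive (fun s => crd (gam s) k) l)).
Proof.
  intros Hgam.
  pose (g0 := fun s => crd (gam s) 0); pose (g1 := fun s => crd (gam s) 1);
  pose (g2 := fun s => crd (gam s) 2); pose (g3 := fun s => crd (gam s) 3).
  assert (E : forall s, gam s = (g0 s, g1 s, g2 s, g3 s)) by (intros s; apply pt_eta).
  assert (H0 : ex_derive g0 l) by (apply Hgam; lia).
  assert (H1 : ex_derive g1 l) by (apply Hgam; lia).
  assert (H2 : ex_derive g2 l) by (apply Hgam; lia).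
  assert (H3 : ex_derive g3 l) by (apply Hgam; lia).
  unfold sum4; simpl; fold g0 g1 g2 g3.
  eapply is_derive_ext; [intros s; rewrite (E s); reflexivity|].
  rewrite (E l); clearbody g0 g1 g2 g3.
  destruct r as [|[|[|r]]]; unfold pd; simpl; repeat (compute_Derive; eta_reduce);
  auto_derive; try (repeat split; auto; fail); eta_reduce;
  match goal with |- ?x = ?y => change (@eq R x y) end; field.
Qed.

Variable H : R -> R -> R -> R.
Hypothesis HPDE : forall u x1 x2 : R,
  (mu * x1 + a1 u) * Derive (fun t => H u t x2) x1
  + (mu * x2 + a2 u) * Derive (fun t => H u x1 t) x2
  = 2 * mu * H u x1 x2 + 2 * (Derive_n a1 2 u * x1 + Derive_n a2 2 u * x2)
    - 2 * Derive_n a 2 u + 4 * Derive bb u.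

Lemma Lie_fvf i j p : (i < 4)%nat -> (j < 4)%nat ->
  Lie (fvf a a1 a2 bb mu c) (ppg H) i j p =
  2 * omg a1 a2 bb mu p * Kdu i j p - mu * crd p 0 * (ppg H i j p + c * Kdu i j p).
Proof.
  intros Hi Hj; destruct p as [[[u v] x1] x2].
  pose proof (f_equal (fun z => u / 2 * z) (HPDE u x1 x2)) as HP; cbv beta in HP.
  change (Derive_n ?f 2 u) with (Derive (Derive f) u) in HP.
  destruct i as [|[|[|[|i]]]]; try lia; destruct j as [|[|[|[|j]]]]; try lia;
  unfold Lie, sum4, omg, Kdu; simpl; unfold pd; simpl;
  repeat (compute_Derive; eta_reduce); eta_reduce; lra.
Qed.

Variable Y : VF.
Hypotheses (HY : forall r k p, (r < 4)%nat -> (k < 4)%nat ->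
               ex_derive (fun t => Y r (upd p k t)) (crd p k))
  (HYc : forall r k p, (r < 4)%nat -> (k < 4)%nat -> continuous (pd k (Y r)) p)
  (HCKV : forall i j p, (i < 4)%nat -> (j < 4)%nat ->
     Lie Y (ppg H) i j p = 2 * omg a1 a2 bb mu p * ppg H i j p).

Lemma Lie_Ups i j p : (i < 4)%nat -> (j < 4)%nat ->
  Lie (Ups Y a a1 a2 bb mu c) (ppg H) i j p
  = 2 * (omg a1 a2 bb mu p - c / 2 * mu * crd p 0) * (ppg H i j p + c * Kdu i j p).
Proof.
  intros Hi Hj; unfold Ups.
  rewrite Lie_plus_scal, HCKV, Lie_fvf by auto using ex_derive_fvf.
  field.
Qed.

Lemma is_derive_Ups_comp (gam : R -> pt) r l : (r < 4)%nat ->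
  (forall i, (i < 4)%nat -> ex_derive (fun s => crd (gam s) i) l) ->
  is_derive (fun s => Ups Y a a1 a2 bb mu c r (gam s)) l
    (sum4 (fun k => pd k (Ups Y a a1 a2 bb mu c r) (gam l) * Derive (fun s => crd (gam s) k) l)).
Proof.
  intros Hr Hgam; unfold Ups.
  set (D := fun k => Derive (fun s => crd (gam s) k) l).
  assert (Hsplit : sum4 (fun k => pd k (fun p => Y r p + c * fvf a a1 a2 bb mu c r p) (gam l) * D k)
    = sum4 (fun k => pd k (Y r) (gam l) * D k)
      + c * sum4 (fun k => pd k (fvf a a1 a2 bb mu c r) (gam l) * D k)).
  { rewrite (sum4_ext _ (fun k => pd k (Y r) (gam l) * D k
                                 + c * (pd k (fvf a a1 a2 bb mu c r) (gam l) * D k))).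
    - unfold sum4; simpl; ring.
    - intros k Hk; rewrite pd_plus_scal; [ring|apply HY; auto|apply ex_derive_fvf]. }
  unfold D in Hsplit; rewrite Hsplit.
  apply is_derive_Rplus; [|apply is_derive_scal, is_derive_fvf_comp; auto].
  apply is_derive_comp_pt; auto.
Qed.

End VectorField_f.

Lemma pd_ppg_const (H : R -> R -> R -> R) i j k p :
  (i, j) <> (0%nat, 0%nat) -> pd k (ppg H i j) p = 0.
Proof.
  intros Hij; unfold pd, ppg.
  destruct i as [|[|[|[|i]]]]; destruct j as [|[|[|[|j]]]]; try congruence; apply Derive_const.
Qed.

(* The Euler-Lagrange combination [dX^r/dl p_r + X^r dL/dx^r] is the Lie derivative of the
   metric contracted twice with the velocity. *)
Lemma Lie_ppg_contract (X : VF) (H : R -> R -> R -> R) (p : pt) (D : nat -> R) (n : R) :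
  n <> 0 ->
  sum4 (fun r => sum4 (fun k => pd k (X r) p * D k) * (sum4 (fun b => ppg H r b p * D b) / n)
    + X r p * (/ (2 * n) * D 0%nat ^ 2 * pd r (ppg H 0%nat 0%nat) p))
  = / (2 * n) * sum4 (fun i => sum4 (fun j => Lie X (ppg H) i j p * D i * D j)).
Proof.
  intros Hn; unfold Lie, sum4; simpl.
  remember (ppg H 0%nat 0%nat) as g00 eqn:Hg00.
  rewrite !pd_ppg_const by congruence.
  subst g00.
  unfold ppg; simpl; field; exact Hn.
Qed.

Section Geodesic.

Variables (H : R -> R -> R -> R) (m : R) (gam : R -> pt) (N : R -> R) (l : R).
Hypothesis HN : N l <> 0.

Let D (k : nat) : R := Derive (fun s => crd (gam s) k) l.

Lemma mom_val r : (r < 4)%nat ->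
  mom H m gam N r l = sum4 (fun b => ppg H r b (gam l) * D b) / N l.
Proof.
  intros Hr; unfold mom, Lag, vel, sum4, D; apply is_derive_unique.
  destruct r as [|[|[|[|r]]]]; try lia; simpl;
    (auto_derive; [repeat split; auto|field; exact HN]).
Qed.

Lemma dLdx_val r :
  ex_derive (fun t => ppg H 0%nat 0%nat (upd (gam l) r t)) (crd (gam l) r) ->
  dLdx H m gam N r l = / (2 * N l) * D 0%nat ^ 2 * pd r (ppg H 0%nat 0%nat) (gam l).
Proof.
  intros Hex; unfold dLdx, Lag, pd, D.
  set (G := fun t => ppg H 0%nat 0%nat (upd (gam l) r t)) in *; apply is_derive_unique.
  eapply is_derive_ext; [intros t; change (H _ _ _) with (G t); reflexivity|].
  simpl; auto_derive; [repeat split; auto|]; simpl.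
  change (fun x : R => G x) with G; field; exact HN.
Qed.

Lemma dLdn_val : dLdn H m gam N l
  = - sum4 (fun i => sum4 (fun j => ppg H i j (gam l) * D i * D j)) / (2 * N l ^ 2) - m ^ 2 / 2.
Proof.
  unfold dLdn, Lag, vel, sum4, ppg, D; simpl; apply is_derive_unique.
  auto_derive; [repeat split; auto|field; exact HN].
Qed.

Lemma mass_shell : dLdn H m gam N l = 0 ->
  sum4 (fun i => sum4 (fun j => ppg H i j (gam l) * D i * D j)) = - m ^ 2 * N l ^ 2.
Proof.
  rewrite dLdn_val; set (Q := sum4 _); intros Hshell.
  replace Q with (- (2 * N l ^ 2) * (- Q / (2 * N l ^ 2) - m ^ 2 / 2) - m ^ 2 * N l ^ 2)
    by (field; exact HN).
  rewrite Hshell; ring.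
Qed.

Lemma mom_v_val : mom H m gam N 1 l = D 0%nat / N l.
Proof. rewrite mom_val by lia; unfold sum4, ppg; simpl; f_equal; ring. Qed.

(* With the mass-shell constraint [g(xdot, xdot) = - m^2 n^2] and [p_v = xdot^u / n], the
   choice [c p_v^2 = m^2] makes [g + c K] null on the velocity. *)
Lemma is_derive_charge (X : VF) (Om c piv : R) :
  (forall r, (r < 4)%nat ->
     is_derive (fun s => X r (gam s)) l (sum4 (fun k => pd k (X r) (gam l) * D k))) ->
  (forall r, (r < 4)%nat -> is_derive (mom H m gam N r) l (dLdx H m gam N r l)) ->
  (forall r, (r < 4)%nat ->
     ex_derive (fun t => ppg H 0%nat 0%nat (upd (gam l) r t)) (crd (gam l) r)) ->
  dLdn H m gam N l = 0 -> mom H m gam N 1 l = piv -> c * piv ^ 2 = m ^ 2 ->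
  (forall i j, (i < 4)%nat -> (j < 4)%nat ->
     Lie X (ppg H) i j (gam l) = 2 * Om * (ppg H i j (gam l) + c * Kdu i j (gam l))) ->
  is_derive (fun s => sum4 (fun r => X r (gam s) * mom H m gam N r s)) l 0.
Proof.
  intros HX Hmom HHx Hshell Hpv Hc HLie.
  assert (Hd : is_derive (fun s => sum4 (fun r => X r (gam s) * mom H m gam N r s)) l
    (sum4 (fun r => sum4 (fun k => pd k (X r) (gam l) * D k) * mom H m gam N r l
                    + X r (gam l) * dLdx H m gam N r l)))
    by (apply (is_derive_sum4 (fun r s => X r (gam s) * mom H m gam N r s));
        intros r Hr; apply is_derive_Rmult; auto).
  replace 0 with (sum4 (fun r => sum4 (fun k => pd k (X r) (gam l) * D k) * mom H m gam N r l
                                 + X r (gam l) * dLdx H m gam N r l)); [exact Hd|clear Hd].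
  rewrite (sum4_ext _ (fun r => sum4 (fun k => pd k (X r) (gam l) * D k)
      * (sum4 (fun b => ppg H r b (gam l) * D b) / N l)
    + X r (gam l) * (/ (2 * N l) * D 0%nat ^ 2 * pd r (ppg H 0%nat 0%nat) (gam l))))
    by (intros r Hr; rewrite mom_val, dLdx_val; auto).
  rewrite Lie_ppg_contract by exact HN.
  rewrite (sum4_ext _ (fun i => sum4 (fun j =>
      2 * Om * (ppg H i j (gam l) + c * Kdu i j (gam l)) * D i * D j)))
    by (intros i Hi; apply sum4_ext; intros j Hj; rewrite HLie; auto).
  replace (sum4 _) with (2 * Om * (sum4 (fun i => sum4 (fun j => ppg H i j (gam l) * D i * D j))
                                   + c * D 0%nat ^ 2))
    by (unfold sum4, Kdu; simpl; ring).
  rewrite mass_shell by exact Hshell.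
  rewrite mom_v_val in Hpv.
  replace (D 0%nat) with (piv * N l) by (rewrite <- Hpv; field; exact HN).
  replace (c * (piv * N l) ^ 2) with (m ^ 2 * N l ^ 2) by (rewrite <- Hc; ring).
  ring.
Qed.

End Geodesic.
Theorem mainTheorem4
  (H : R -> R -> R -> R) (a a1 a2 bb : R -> R) (mu : R) (Y : VF)
  (HH : smooth4 (fun p => H (crd p 0) (crd p 2) (crd p 3)))
  (Ha : smooth1 a) (Ha1 : smooth1 a1) (Ha2 : smooth1 a2) (Hbb : smooth1 bb)
  (HY : forall i, (i < 4)%nat -> smooth4 (Y i))
  (HCKV : forall (i j : nat) (p : pt), (i < 4)%nat -> (j < 4)%nat ->
     Lie Y (ppg H) i j p = 2 * omg a1 a2 bb mu p * ppg H i j p)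
  (HYu : forall p : pt,
     Y 0%nat p = mu / 2 * (crd p 2 ^ 2 + crd p 3 ^ 2)
                 + a1 (crd p 0) * crd p 2 + a2 (crd p 0) * crd p 3 + a (crd p 0))
  (HPDE : forall u x1 x2 : R,
     (mu * x1 + a1 u) * Derive (fun t => H u t x2) x1
     + (mu * x2 + a2 u) * Derive (fun t => H u x1 t) x2
     = 2 * mu * H u x1 x2
       + 2 * (Derive_n a1 2 u * x1 + Derive_n a2 2 u * x2)
       - 2 * Derive_n a 2 u + 4 * Derive bb u) :
  (forall (c : R) (i j : nat) (p : pt), (i < 4)%nat -> (j < 4)%nat ->
     Lie (Ups Y a a1 a2 bb mu c) (ppg H) i j p
     = 2 * (omg a1 a2 bb mu p - c / 2 * mu * crd p 0) * (ppg H i j p + c * Kdu i j p))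
  /\
  (forall (m : R) (gam : R -> pt) (N : R -> R) (l1 l2 piv : R),
     l1 < l2 ->
     (forall (i k : nat) (l : R), (i < 4)%nat -> l1 < l < l2 ->
        ex_derive_n (fun s => crd (gam s) i) k l) ->
     (forall (k : nat) (l : R), l1 < l < l2 -> ex_derive_n N k l) ->
     (forall l, l1 < l < l2 -> 0 < N l) ->
     EL_solution H m gam N l1 l2 ->
     piv <> 0 ->
     (forall l, l1 < l < l2 -> mom H m gam N 1%nat l = piv) ->
     forall la lb, l1 < la < l2 -> l1 < lb < l2 ->
       sum4 (fun r => Ups Y a a1 a2 bb mu (m ^ 2 / piv ^ 2) r (gam la) * mom H m gam N r la)
       = sum4 (fun r => Ups Y a a1 a2 bb mu (m ^ 2 / piv ^ 2) r (gam lb) * mom H m gam N r lb)).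
Proof.
  assert (HYd : forall r k p, (r < 4)%nat -> (k < 4)%nat ->
    ex_derive (fun t => Y r (upd p k t)) (crd p k))
    by (intros; apply smooth4_ex_derive; auto).
  assert (HYc : forall r k p, (r < 4)%nat -> (k < 4)%nat -> continuous (pd k (Y r)) p)
    by (intros; apply smooth4_continuous_pd; auto).
  split.
  { intros c i j p Hi Hj; apply Lie_Ups; auto using smooth1_ex_derive, smooth1_ex_derive2. }
  intros m gam N l1 l2 piv _ Hgam _ HNpos HEL Hpiv Hpv la lb.
  apply (is_derive_const_on
    (fun s => sum4 (fun r => Ups Y a a1 a2 bb mu (m ^ 2 / piv ^ 2) r (gam s) * mom H m gam N r s))).
  intros l Hl.
  assert (HNl : N l <> 0) by (specialize (HNpos l Hl); lra).
  apply (is_derive_charge H m gam N l HNl (Ups Y a a1 a2 bb mu (m ^ 2 / piv ^ 2))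
           (omg a1 a2 bb mu (gam l) - m ^ 2 / piv ^ 2 / 2 * mu * crd (gam l) 0)
           (m ^ 2 / piv ^ 2) piv).
  - intros r Hr; apply is_derive_Ups_comp; auto using smooth1_ex_derive, smooth1_ex_derive2.
    intros i Hi; exact (Hgam i 1%nat l Hi Hl).
  - intros r Hr; exact (proj1 (HEL l Hl) r Hr).
  - intros r Hr; exact (smooth4_ex_derive _ r (gam l) HH Hr).
  - exact (proj2 (HEL l Hl)).
  - exact (Hpv l Hl).
  - field; exact Hpiv.
  - intros i j Hi Hj; apply Lie_Ups; auto using smooth1_ex_derive, smooth1_ex_derive2.
Qed.
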